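(* Let $\phi=\phi_{\mathrm{NH}}$, $\phi_{\mathrm{NH}}(y,t)=t^{-1/2}\exp(y^2/(2t))$, and $\Phi(\boldsymbol x,t)=\sum_{i=1}^N\phi(x_i,t)$. Let $B>0$, $\boldsymbol x\in[0,\infty)^N$, $t>0$, $\boldsymbol p\in\Delta^{N-1}$ with $p_i\propto\partial_x\phi(x_i,t)$ (arbitrary if all these vanish), $\boldsymbol\ell\in\mathbb{R}^N$ with $\max_{i,i'}|\ell_i-\ell_{i'}|\le B$, $\Delta x_i=\langle\boldsymbol p,\boldsymbol\ell\rangle-\ell_i$, and let $\Delta t\ge0$ be such that $\Phi(\boldsymbol x+\Delta\boldsymbol x,t+\Delta t)=\Phi(\boldsymbol x,t)$. If $K>0$ is such that $\max_{i\in[N]}x_i^2/t\le K$, then $$t\ge256e^2B^2\max\{K,1\}\implies\Delta t\le2eB^2.$$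
   Context: $\Delta^{N-1}$ is the probability simplex in $\mathbb{R}^N$. *)

From HB Require Import structures.
From mathcomp Require Import all_boot all_order all_algebra.
From mathcomp Require Import all_classical all_reals all_analysis.
Set Implicit Arguments. Unset Strict Implicit. Unset Printing Implicit Defensive.
Import Order.TTheory GRing.Theory Num.Theory.
Local Open Scope ring_scope.

Definition phiNH (R : realType) (y t : R) : R :=
  (Num.sqrt t)^-1 * expR (y ^+ 2 / (2 * t)).

Definition dphiNH (R : realType) (y t : R) : R :=
  derive1 (fun z => phiNH z t) y.

Definition PhiNH (R : realType) (N : nat) (x : 'I_N -> R) (t : R) : R :=
  \sum_(i < N) phiNH (x i) t.

Definition in_simplex (R : realType) (N : nat) (p : 'I_N -> R) : Prop :=
  (forall i, 0 <= p i) /\ \sum_(i < N) p i = 1.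

From mathcomp Require Import all_boot all_order all_algebra.
From mathcomp Require Import all_classical all_reals all_analysis.
From mathcomp.algebra_tactics Require Import ring lra.
Import Order.TTheory GRing.Theory Num.Theory.
Local Open Scope ring_scope.

(* Assume Δt > 2eB², so that every |Δx_i| <= B is small against Δt.  Then each
   potential grows by strictly less than its first-order change in space:
   φ(x_i + Δx_i, t + Δt) < φ(x_i, t) (1 + x_i Δx_i / (t + Δt)), since the decay
   e^{Δt/(2(t+Δt))} <= sqrt((t+Δt)/t) of the normalisation and the bound
   e^{u - 2u²} <= 1 + u absorb the quadratic part of the exponent.  Summing over
   i, the first-order terms add up to (t/(t+Δt)) Σ ∂φ(x_i, t) Δx_i = 0, because
   p is proportional to ∂φ and Σ p_i Δx_i = 0.  Hence Φ strictly decreases,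
   contradicting Φ(x + Δx, t + Δt) = Φ(x, t). *)

Section ExpBounds.
Variable R : realType.
Implicit Types s v t d : R.

Lemma expR_le_inv1B s : s < 1 -> expR s <= (1 - s)^-1.
Proof.
move=> s1; have := expR_ge1Dx (- s); rewrite expRN => h.
by rewrite -[expR s]invrK lef_pV2 ?posrE ?invr_gt0 ?expR_gt0 ?subr_gt0.
Qed.

Lemma expR_subr_sqr_le1D v : - (1 / 2) <= v -> expR (v - 2 * v ^+ 2) <= 1 + v.
Proof.
move=> v_ge; have v1 : v - 2 * v ^+ 2 < 1 by nra.
apply: le_trans (expR_le_inv1B _ v1) _.
rewrite -div1r ler_pdivrMr; last by lra.
have : 0 <= v ^+ 2 * (1 + 2 * v) by rewrite mulr_ge0 ?sqr_ge0 //; lra.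
lra.
Qed.

Lemma expR_half_div_sqrt_le t d : 0 < t -> 0 <= d ->
  expR (d / (2 * (t + d))) / Num.sqrt (t + d) <= (Num.sqrt t)^-1.
Proof.
move=> t0 d0; have td0 : 0 < t + d by lra.
rewrite -(ler_pXn2r (_ : 0 < 2)%N) ?nnegrE ?divr_ge0 ?invr_ge0 ?sqrtr_ge0 ?expR_ge0 //.
rewrite expr_div_n exprVn !sqr_sqrtr ?(ltW t0) ?(ltW td0) // -expRM_natl.
have -> : 2 * (d / (2 * (t + d))) = d / (t + d) by field; lra.
have dt1 : d / (t + d) < 1 by rewrite ltr_pdivrMr //; lra.
have -> : t^-1 = (1 - d / (t + d))^-1 / (t + d) by field; lra.
by rewrite ler_pM2r ?invr_gt0 // expR_le_inv1B.
Qed.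
End ExpBounds.

Lemma sqr_mul_le_sqr (R : realFieldType) (y h M B t : R) : 0 < t ->
  y ^+ 2 <= M * t -> h ^+ 2 <= B ^+ 2 -> 16 * M * B ^+ 2 <= t ->
  16 * (y * h) ^+ 2 <= t ^+ 2.
Proof.
move=> t0 hy hh hM; have := ler_wpM2r (ltW t0) hM.
have : (y * h) ^+ 2 <= M * t * B ^+ 2 by rewrite exprMn ler_pM ?sqr_ge0.
rewrite expr2; lra.
Qed.

Section PhiNH.
Variable R : realType.
Implicit Types y h t d : R.

Lemma is_derive_phiNH y t : t != 0 ->
  is_derive y 1 (fun z => phiNH z t) (y / t * phiNH y t).
Proof.
move=> t0.
have hsq : is_derive y 1 (fun z : R => z ^+ 2 / (2 * t)) (y / t).
  rewrite (_ : (fun z => _) = (2 * t)^-1 \*: (@id R) ^+ 2); last first.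
    by apply/funext => z; rewrite /= mulrC.
  by apply: is_derive_eq; rewrite /= expr1 /GRing.scale /=; field.
have := is_deriveZ (Num.sqrt t)^-1 (is_derive1_comp (is_derive_expR _) hsq).
by move/is_derive_eq; apply; rewrite /phiNH /GRing.scale /=; ring.
Qed.

Lemma dphiNHE y t : t != 0 -> dphiNH y t = y / t * phiNH y t.
Proof.
move=> t0; rewrite /dphiNH derive1E.
exact: (@derive_val _ _ _ _ _ _ _ (is_derive_phiNH y t t0)).
Qed.

Lemma phiNH_exponent_lt y h t d : 0 < t -> 0 < d -> 4 * h ^+ 2 <= d ->
  (y + h) ^+ 2 / (2 * (t + d)) <
  y ^+ 2 / (2 * t) + (y * h / (t + d) - 2 * (y * h / (t + d)) ^+ 2)
  + d / (2 * (t + d)).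
Proof.
move=> t0 d0 hd; set t' := t + d; have t'0 : 0 < t' by rewrite /t'; lra.
rewrite -subr_gt0.
have -> : y ^+ 2 / (2 * t) + (y * h / t' - 2 * (y * h / t') ^+ 2) + d / (2 * t')
    - (y + h) ^+ 2 / (2 * t')
  = (t * t' * (d - h ^+ 2) + y ^+ 2 * (d * t' - 4 * h ^+ 2 * t)) / (2 * t * t' ^+ 2).
  by rewrite /t'; field; rewrite -/t'; lra.
apply: divr_gt0; last by rewrite !mulr_gt0 // exprn_gt0.
have : 0 < t * t' * (d - h ^+ 2) by rewrite !mulr_gt0 //; lra.
have : 0 <= y ^+ 2 * (d * t' - 4 * h ^+ 2 * t).
  by rewrite mulr_ge0 ?sqr_ge0 // subr_ge0 /t'; nra.
lra.
Qed.

Lemma phiNH_shift_lt y h t d : 0 < t -> 0 < d -> 4 * h ^+ 2 <= d ->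
  16 * (y * h) ^+ 2 <= t ^+ 2 ->
  phiNH (y + h) (t + d) < phiNH y t * (1 + y * h / (t + d)).
Proof.
move=> t0 d0 hd hyh; set t' := t + d; have t'0 : 0 < t' by rewrite /t'; lra.
set v := y * h / t'.
have v_ge : - (1 / 2) <= v.
  have tt' : t ^+ 2 <= t' ^+ 2 by rewrite /t'; nra.
  by rewrite /v ler_pdivlMr //; nra.
rewrite /phiNH -/t'.
set E := expR (y ^+ 2 / (2 * t)); set a := expR (d / (2 * t')).
apply: (lt_le_trans (y := (Num.sqrt t')^-1 * (E * expR (v - 2 * v ^+ 2) * a))).
  rewrite ltr_pM2l ?invr_gt0 ?sqrtr_gt0 // /E /a -!expRD ltr_expR.
  exact: phiNH_exponent_lt.
have -> : (Num.sqrt t')^-1 * (E * expR (v - 2 * v ^+ 2) * a)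
  = E * (expR (v - 2 * v ^+ 2) * (a / Num.sqrt t')) by ring.
have -> : (Num.sqrt t)^-1 * E * (1 + v) = E * ((1 + v) * (Num.sqrt t)^-1) by ring.
rewrite ler_pM2l ?expR_gt0 //; apply: ler_pM.
- exact: expR_ge0.
- by rewrite divr_ge0 ?expR_ge0 ?sqrtr_ge0.
- exact: expR_subr_sqr_le1D.
- exact: expR_half_div_sqrt_le (ltW d0).
Qed.

Lemma PhiNH_shift_lt N (x h : 'I_N -> R) t d : (0 < N)%N -> 0 < t -> 0 < d ->
  \sum_(i < N) dphiNH (x i) t * h i = 0 ->
  (forall i, 4 * h i ^+ 2 <= d) -> (forall i, 16 * (x i * h i) ^+ 2 <= t ^+ 2) ->
  PhiNH (fun i => x i + h i) (t + d) < PhiNH x t.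
Proof.
move=> N0 t0 d0 hsum hd hxh; have td0 : t + d != 0 by rewrite gt_eqF ?addr_gt0.
apply: (lt_le_trans (y := \sum_(i < N) phiNH (x i) t * (1 + x i * h i / (t + d)))).
  apply: ltr_sum => [|i _]; last exact: phiNH_shift_lt.
  by apply/hasP; exists (Ordinal N0); rewrite ?mem_index_enum.
have -> : \sum_(i < N) phiNH (x i) t * (1 + x i * h i / (t + d))
    = PhiNH x t + t / (t + d) * \sum_(i < N) dphiNH (x i) t * h i.
  rewrite mulr_sumr -big_split /=; apply: eq_bigr => i _.
  by rewrite dphiNHE ?gt_eqF //; field; rewrite td0 gt_eqF.
by rewrite hsum mulr0 addr0.
Qed.
End PhiNH.

Section Simplex.
Variables (R : realType) (N : nat).
Implicit Types p w l : 'I_N -> R.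

Lemma in_simplex_gt0 p : in_simplex p -> (0 < N)%N.
Proof.
by case: N p => [p [_]|//]; rewrite big_ord0 => /eqP; rewrite eq_sym oner_eq0.
Qed.

Lemma norm_mean_sub_le p l (c B : R) : in_simplex p ->
  (forall j, `|l j - c| <= B) -> `|\sum_(j < N) p j * l j - c| <= B.
Proof.
case=> p0 p1 hl.
have -> : \sum_(j < N) p j * l j - c = \sum_(j < N) p j * (l j - c).
  by rewrite (eq_bigr _ (fun j _ => mulrBr _ _ _)) sumrB -mulr_suml p1 mul1r.
apply: le_trans (ler_norm_sum _ _ _) _.
rewrite -[B]mul1r -p1 mulr_suml; apply: ler_sum => j _.
by rewrite normrM ger0_norm // ler_wpM2l.
Qed.

Lemma sum_mul_mean_dev_eq0 w p l : \sum_(i < N) p i = 1 ->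
  ((exists i, w i != 0) -> forall i, p i = w i / \sum_(j < N) w j) ->
  \sum_(i < N) w i * (\sum_(j < N) p j * l j - l i) = 0.
Proof.
move=> p1 hp.
have [[i wi]|w0] := pselect (exists i, w i != 0); last first.
  rewrite big1 // => i _; case: (eqVneq (w i) 0) => [->|wi]; first by rewrite mul0r.
  by case: w0; exists i.
have {}hp := hp (ex_intro _ i wi); set S := \sum_(j < N) w j in hp.
have S0 : S != 0.
  apply/eqP => S0; move: p1; rewrite big1 => [/eqP|j _].
    by rewrite eq_sym oner_eq0.
  by rewrite hp S0 invr0 mulr0.
under eq_bigr => j _ do rewrite -[w j](divfK S0) -hp [p j * S]mulrC -mulrA.
rewrite -mulr_sumr (eq_bigr _ (fun j _ => mulrBr _ _ _)) sumrB -mulr_suml p1.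
by rewrite mul1r subrr mulr0.
Qed.
End Simplex.

Theorem lemma6p12 (R : realType) (N : nat) (B K t dt : R)
    (x p l : 'I_N -> R) :
  0 < B ->
  (forall i, 0 <= x i) ->
  0 < t ->
  in_simplex p ->
  ((exists i, dphiNH (x i) t != 0) ->
     forall i, p i = dphiNH (x i) t / \sum_(j < N) dphiNH (x j) t) ->
  (forall i i', `|l i - l i'| <= B) ->
  0 <= dt ->
  PhiNH (fun i => x i + ((\sum_(j < N) p j * l j) - l i)) (t + dt)
    = PhiNH x t ->
  0 < K ->
  (forall i, x i ^+ 2 / t <= K) ->
  256 * expR 1 ^+ 2 * B ^+ 2 * Num.max K 1 <= t ->
  dt <= 2 * expR 1 * B ^+ 2.
Proof.
move=> B0 _ t0 hp hprop hl _ hPhi _ hK ht.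
rewrite leNgt; apply/negP => dt_gt.
have e2 : 2 <= expR 1 :> R by have := expR_ge1Dx (1 : R); lra.
have devB i : (\sum_(j < N) p j * l j - l i) ^+ 2 <= B ^+ 2.
  rewrite -real_normK ?num_real // ler_pXn2r ?nnegrE ?normr_ge0 ?(ltW B0) //.
  exact: norm_mean_sub_le (fun j => hl j i).
have xM i : x i ^+ 2 <= Num.max K 1 * t.
  rewrite -ler_pdivrMr //; apply: le_trans (hK i) _.
  by rewrite le_max lexx.
have MB : 16 * Num.max K 1 * B ^+ 2 <= t.
  apply: le_trans ht.
  rewrite (_ : 256 * _ * _ * _ = 16 * expR 1 ^+ 2 * (16 * Num.max K 1 * B ^+ 2));
    last by ring.
  rewrite ler_peMl ?mulr_ge0 ?le_max ?ler01 ?orbT ?(ltW B0) //.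
  by rewrite expr2; nra.
move: hPhi; apply/eqP; rewrite lt_eqF //.
apply: PhiNH_shift_lt => [||||i|i] /=.
- exact: in_simplex_gt0 hp.
- exact: t0.
- by apply: le_lt_trans dt_gt; rewrite mulr_ge0 ?sqr_ge0 // mulr_ge0 // expR_ge0.
- exact: sum_mul_mean_dev_eq0 hp.2 hprop.
- have : 4 * B ^+ 2 <= 2 * expR 1 * B ^+ 2 by rewrite ler_wpM2r ?sqr_ge0 //; lra.
  have := devB i; lra.
- exact: sqr_mul_le_sqr.
Qed.
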